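(* Let $\ell$ and $B$ be positive integers with $B\ge 5\cdot 2^{\ell+1}$, and let $H$ be a graph with loops allowed on an alphabet $A$ of $\ell$ letters. For any finite word $w$ over $A$ with $|w|\ge B^{\ell}$, the graph $G_{w,H}(1,2,\dots,|w|)$ contains, as an induced subgraph, a strong $\ell$-factor $G_{w',H}(1,2,\dots,|w'|)$ of order at least $B$, where $w'$ is a factor of $w$.
   Context: A word over $A$ is a map $w:\{1,\dots,n\}\to A$, $|w|=n$, $w_i=w(i)$; $w'$ is a factor of $w$ if $w'_i=w_{i+s}$ for some fixed $s\ge0$ and all $1\le i\le|w'|$. For positive integers $u_1<\dots<u_k\le|w|$, $G_{w,H}(u_1,\dots,u_k)$ has vertex set $\{u_i\}$ and $u_iu_j$ is an edge iff ($|u_i-u_j|=1$ and $w_{u_i}w_{u_j}\notin E(H)$) or ($|u_i-u_j|>1$ and $w_{u_i}w_{u_j}\in E(H)$) (loops of $H$ handle equal letters). An $\ell$-factor is a graph $G_{w,H}(u_1,\dots,u_k)$ with $u_1,\dots,u_k$ consecutive integers and $|V(H)|=\ell$. Its letter partition consists of the nonempty sets $V_a=\{u_i:w_{u_i}=a\}$, $a\in A$; it is an $(\ell,2)$-partition, and the $\ell$-factor is strong if this is a strong $(\ell,2)$-partition, i.e., every bag $V_a$ has at least $5\cdot2^{\ell}\cdot 2$ vertices. *)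

From mathcomp Require Import all_boot.
Unset Strict Implicit. Unset Printing Implicit Defensive.

(* A word w over A is a seq A; position i : 'I_(size w) (0-indexed here,
   position i corresponds to position i+1 of the paper). *)
Definition wletter (A : finType) (w : seq A) (i : 'I_(size w)) : A :=
  tnth (in_tuple w) i.
Arguments wletter {A} w i.

Definition consec (u v : nat) : bool := (u.+1 == v) || (v.+1 == u).

(* Adjacency of G_{w,H}(1,...,|w|): H is a (symmetric) relation on A with
   loops allowed.  u v adjacent iff u <> v and
   (|u-v| = 1 and w_u w_v not in E(H)) or (|u-v| > 1 and w_u w_v in E(H)). *)
Definition wadj (A : finType) (H : rel A) (w : seq A) (u v : 'I_(size w)) : bool :=
  (u != v) &&
  (if consec u v then ~~ H (wletter w u) (wletter w v) else H (wletter w u) (wletter w v)).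

(* The letter partition of G_{w,H}(1..|w|) is strong (for k = 2 bags-bound):
   every nonempty bag V_a has at least 5 * 2^l * 2 vertices. *)
Definition strong_letter_partition (A : finType) (l : nat) (w : seq A) : Prop :=
  forall a : A, a \in w -> 5 * 2 ^ l * 2 <= count_mem a w.

Definition induced_sub (A : finType) (H : rel A) (w' w : seq A) : Prop :=
  exists f : 'I_(size w') -> 'I_(size w),
    injective f /\ forall u v, wadj A H w (f u) (f v) = wadj A H w' u v.

From mathcomp Require Import all_boot zify.

Set Implicit Arguments.
Unset Strict Implicit.

(* Induction on the number of distinct letters. If every letter of w occurs
   at least c <= B times, w itself will do. Otherwise some letter a occurs
   m < B times; its occurrences cut w into m + 1 a-free factors, one of which
   has length at least (|w| - m) / (m + 1), hence at least B^(k-1) when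
   |w| >= B^k, and uses one letter fewer. Finally, a factor w' of w induces
   G_{w',H} inside G_{w,H} through the shift of positions. *)

Lemma split_first_occurrence (T : eqType) (a : T) (w : seq T) :
  a \in w -> exists p s, w = p ++ a :: s /\ a \notin p.
Proof.
elim: w => [//|x w IH]; rewrite in_cons.
case: (eqVneq a x) => [->|nax] /= aw; first by exists [::], w.
have [p [s [-> ap]]] := IH aw.
by exists (x :: p), s; rewrite in_cons negb_or nax.
Qed.

Lemma long_infix_avoiding (T : eqType) (a : T) (w : seq T) :
  let n := count_mem a w in
  exists u, [/\ infix u w, a \notin u & size w <= n.+1 * size u + n].
Proof.
rewrite /=; move count_a: (count_mem a w) => n.
elim: n w count_a => [|n IH] w count_a.
  by exists w; split; [exact: infix_refl | apply/count_memPn | lia].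
have aw : a \in w by rewrite -has_pred1 has_count count_a.
have [p [s [def_w ap]]] := split_first_occurrence aw; subst w.
have count_s : count_mem a s = n.
  by move: count_a; rewrite count_cat /= eqxx (count_memPn ap); lia.
have [u [us au size_s]] := IH s count_s.
have -> : size (p ++ a :: s) = size p + (size s).+1 by rewrite size_cat.
case: (leqP (size p) (size u)) => [p_le_u|u_lt_p].
  exists u; split => //; last by nia.
  by apply: infix_trans us _; rewrite -cat_rcons; exact: suffix_infix.
by exists p; split => //; [exact: prefix_infix | nia].
Qed.

Lemma size_undup_infix_avoiding (T : eqType) (a : T) (u w : seq T) :
  infix u w -> a \in w -> a \notin u -> size (undup u) < size (undup w).
Proof.
move=> uw aw au; change (size (a :: undup u) <= size (undup w)).
apply: uniq_leq_size; first by rewrite /= mem_undup au undup_uniq.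
move=> x; rewrite in_cons !mem_undup => /orP [/eqP -> //|].
exact: mem_infix uw x.
Qed.

Lemma infix_frequent_letters (T : eqType) (B c k : nat) (w : seq T) :
  0 < B -> c <= B -> size (undup w) <= k -> B ^ k <= size w ->
  exists w', [/\ infix w' w, B <= size w' &
                 forall a, a \in w' -> c <= count_mem a w'].
Proof.
move=> B_gt0 c_le_B; elim: k w => [|k IH] w undup_w size_w.
  by move: undup_w size_w; rewrite leqn0 size_eq0 => /eqP/undup_nil ->.
pose frequent a := c <= count_mem a w.
have [/allP all_frequent|] := boolP (all frequent w).
  exists w; split; [exact: infix_refl | | exact: all_frequent].
  by apply: leq_trans size_w; rewrite expnS leq_pmulr ?expn_gt0 ?B_gt0.
case/allPn => a aw; rewrite -ltnNge => rare_a.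
have [u [uw au size_wu]] := long_infix_avoiding a w.
have undup_u : size (undup u) <= k.
  by rewrite -ltnS (leq_trans (size_undup_infix_avoiding uw aw au)).
have size_u : B ^ k <= size u.
  rewrite leqNgt; apply/negP => small_u.
  have : (count_mem a w).+1 * (size u).+1 <= size w.
    by apply: leq_trans size_w; rewrite expnS leq_mul // (leq_trans rare_a).
  by nia.
have [w' [w'u large_w' frequent_w']] := IH u undup_u size_u.
by exists w'; split => //; exact: infix_trans w'u uw.
Qed.

Lemma infix_induced_sub (A : finType) (H : rel A) (w' w : seq A) :
  infix w' w -> induced_sub A H w' w.
Proof.
case/infixP=> p [s def_w].
have shift_lt (u : 'I_(size w')) : size p + u < size w.
  by rewrite def_w !size_cat ltn_add2l ltn_addr.
pose shift u := Ordinal (shift_lt u).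
have shift_inj : injective shift.
  by move=> u v [] /addnI /val_inj.
have letter_shift u : wletter w (shift u) = wletter w' u.
  rewrite /wletter !(tnth_nth (wletter w' u)) /= def_w.
  by rewrite nth_cat ltnNge leq_addr addKn nth_cat ltn_ord.
exists shift; split => // u v; rewrite /wadj !letter_shift (inj_eq shift_inj).
by rewrite /consec /= -!addnS !eqn_add2l.
Qed.

Theorem lemma3p12 (l B : nat) (A : finType) (H : rel A) :
  0 < l -> 0 < B -> 5 * 2 ^ l.+1 <= B ->
  #|A| = l -> symmetric H ->
  forall w : seq A, B ^ l <= size w ->
  exists w' : seq A,
    [/\ infix w' w, B <= size w', strong_letter_partition A l w'
      & induced_sub A H w' w].
Proof.
move=> _ B_gt0 B_large card_A _ w size_w.
have undup_w : size (undup w) <= l.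
  by rewrite -card_A -(card_uniqP (undup_uniq w)) max_card.
have bag_le_B : 5 * 2 ^ l * 2 <= B by rewrite -mulnA -expnSr.
have [w' [w'w large_w' frequent_w']] :=
  infix_frequent_letters B_gt0 bag_le_B undup_w size_w.
by exists w'; split => //; exact: infix_induced_sub.
Qed.
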